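(* Let $f\in\operatorname{Diff}^1(\mathbb{T}^3)$ be partially hyperbolic with $L_f$ Anosov, and let $F:\mathbb{R}^3\to\mathbb{R}^3$ be a lift of $f$. Then for every $g\in\mathcal{C}^1(f)$ there exist an integer $0<l\le|\det(L_f-\mathrm{Id}_{\mathbb{R}^3})|$ and a lift $\widehat G$ of $g^l$ to $\mathbb{R}^3$ such that $F\circ\widehat G=\widehat G\circ F$. Moreover, if $g$ is homotopic to the identity, $l$ can be chosen to be a divisor of $|\det(L_f-\mathrm{Id}_{\mathbb{R}^3})|$.
   Context: Partially hyperbolic: $Df$-invariant continuous splitting $T\mathbb{T}^3=E^s\oplus E^c\oplus E^u$ ($E^s,E^u$ nontrivial) with, for some $N$ and all $x$, $\|Df^N|_{E^s(x)}\|\le 1/2$, $\|Df^{-N}|_{E^u(x)}\|\le 1/2$, $\|Df^N|_{E^s(x)}\|\|Df^{-N}|_{E^c(f^Nx)}\|\le1/2$, $\|Df^N|_{E^c(x)}\|\|Df^{-N}|_{E^u(f^Nx)}\|\le 1/2$. $L_f\in GL(3,\mathbb{Z})$ is the linear part of $f$ (action on $\pi_1(\mathbb{T}^3)=\mathbb{Z}^3$); Anosov = no eigenvalue of modulus $1$. A lift of $f$ is a map $F:\mathbb{R}^3\to\mathbb{R}^3$ with $\pi\circ F=f\circ\pi$, $\pi:\mathbb{R}^3\to\mathbb{T}^3$ the covering. $\mathcal{C}^1(f)=\{g\in\operatorname{Diff}^1(\mathbb{T}^3): gf=fg\}$. *)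

From HB Require Import structures.
From mathcomp Require Import all_boot all_order all_algebra.
From mathcomp Require Import algC.
From mathcomp Require Import all_classical all_reals all_analysis.
Set Implicit Arguments. Unset Strict Implicit. Unset Printing Implicit Defensive.
Import Order.TTheory GRing.Theory Num.Theory.
Import numFieldNormedType.Exports.
Local Open Scope classical_set_scope.
Local Open Scope ring_scope.

(* The 3-torus is R^3 / Z^3 with its flat metric; points of R^3 are row
   vectors 'rV[R]_3.  A self-map h of T^3 is handled through a lift
   H : R^3 -> R^3 (pi \o H = h \o pi); two maps H, H' are lifts of the same
   torus map iff H x - H' x is in Z^3 for every x.  The tangent bundle of
   T^3 is trivialised: T_{pi x} T^3 = R^3 and Dh(pi x) = DH(x). *)

Section Torus.
Variable R : realType.
Local Notation vec := 'rV[R]_3.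

Definition intvec (v : vec) : Prop := forall i, v ord0 i \is a Num.int.

Definition descends (H : vec -> vec) : Prop :=
  forall x n, intvec n -> intvec (H (x + n) - H x).

Definition same_torus_map (H K : vec -> vec) : Prop :=
  forall x, intvec (H x - K x).

(* Jacobian matrix (row-vector convention: v |-> v *m Jac H x) *)
Definition Jac (H : vec -> vec) (x : vec) : 'M[R]_3 := lin1_mx ('d H x).

Definition C1 (H : vec -> vec) : Prop :=
  (forall x, differentiable H x) /\ continuous (fun x => Jac H x).

Definition diff1_lift_inv (H Hinv : vec -> vec) : Prop :=
  [/\ cancel H Hinv, cancel Hinv H, C1 H /\ C1 Hinv & descends H /\ descends Hinv].

Definition diff1_lift (H : vec -> vec) : Prop := exists Hinv, diff1_lift_inv H Hinv.

(* L is the linear part (action on pi_1 T^3 = Z^3) of the torus map lifted by H *)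
Definition linear_part (H : vec -> vec) (L : 'M[int]_3) : Prop :=
  forall x (n : 'rV[int]_3),
    H (x + map_mx intr n) = H x + map_mx intr (n *m L).

Definition anosov_mx (L : 'M[int]_3) : Prop :=
  forall z : algC, `|z| = 1 -> ~ eigenvalue (map_mx (intr : int -> algC) L) z.

Definition enorm (v : vec) : R := Num.sqrt (\sum_i v ord0 i ^+ 2).

Definition rnorm (A E : 'M[R]_3) : R :=
  sup [set enorm (v *m A) | v in [set v : vec | (v <= E)%MS /\ enorm v = 1]].

(* continuity of a subbundle x |-> E x of the (trivial) tangent bundle:
   local continuous frames *)
Definition cont_subbundle (E : vec -> 'M[R]_3) : Prop :=
  forall x : vec, exists k (B : vec -> 'M[R]_(k, 3)),
    continuous B /\
    \forall y \near x, row_free (B y) /\ (B y == E y)%MS.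

Definition periodic_bundle (E : vec -> 'M[R]_3) : Prop :=
  forall x n, intvec n -> (E (x + n)%R == E x)%MS.

Definition invariant_bundle (H : vec -> vec) (E : vec -> 'M[R]_3) : Prop :=
  forall x, (E x *m Jac H x == E (H x))%MS.

Definition part_hyp_inv (H Hinv : vec -> vec) : Prop :=
  exists (Es Ec Eu : vec -> 'M[R]_3) (N : nat),
  [/\ [/\ periodic_bundle Es, periodic_bundle Ec & periodic_bundle Eu] /\
      [/\ cont_subbundle Es, cont_subbundle Ec & cont_subbundle Eu],
      (forall x, mxdirect (Es x + Ec x + Eu x) /\ (Es x + Ec x + Eu x == 1%:M)%MS),
      (forall x, \rank (Es x) != 0%N /\ \rank (Eu x) != 0%N),
      [/\ invariant_bundle H Es, invariant_bundle H Ec & invariant_bundle H Eu] &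
      forall x,
      [/\ rnorm (Jac (iter N H) x) (Es x) <= 2^-1,
          rnorm (Jac (iter N Hinv) x) (Eu x) <= 2^-1,
          rnorm (Jac (iter N H) x) (Es x)
            * rnorm (Jac (iter N Hinv) (iter N H x)) (Ec (iter N H x)) <= 2^-1 &
          rnorm (Jac (iter N H) x) (Ec x)
            * rnorm (Jac (iter N Hinv) (iter N H x)) (Eu (iter N H x)) <= 2^-1]].

Definition part_hyp (H : vec -> vec) : Prop :=
  exists Hinv, diff1_lift_inv H Hinv /\ part_hyp_inv H Hinv.

Definition homotopic_to_id (G : vec -> vec) : Prop :=
  exists Hom : R * vec -> vec,
    [/\ {within [set p : R * vec | 0 <= p.1 <= 1], continuous Hom},
        (forall t, 0 <= t <= 1 -> descends (fun x => Hom (t, x))),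
        same_torus_map (fun x => Hom (0, x)) id &
        same_torus_map (fun x => Hom (1, x)) G].

End Torus.

From HB Require Import structures.
From mathcomp Require Import all_boot all_order all_algebra.
From mathcomp Require Import algC.
From mathcomp Require Import all_classical all_reals all_analysis.
From mathcomp Require Import lra.
Import Order.TTheory GRing.Theory Num.Theory.
Import numFieldNormedType.Exports.
Local Open Scope classical_set_scope.
Local Open Scope ring_scope.
Set Implicit Arguments. Unset Strict Implicit. Unset Printing Implicit Defensive.

(* A lift G of a map commuting with f satisfies F (G x) = G (F x) + m for a
   constant integer vector m, hence F (G^l x) = G^l (F x) + c_l with
   c_(l+1) = phi c_l + m, where phi is the action of G on Z^3; phi is
   invertible and commutes with L.  The lift G^l - k commutes with F exactly
   when c_l = k (L - Id).  As Z^3 / Z^3 (L - Id) has d = |det (L - Id)|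
   elements, two of c_0, ..., c_d, say c_i and c_j with i < j, are congruent
   modulo Z^3 (L - Id); since c_(i+e) - c_i = phi^i c_e and phi^-1 preserves
   Z^3 (L - Id), c_(j-i) lies in Z^3 (L - Id).  If G is homotopic to the
   identity then phi = id, so c_l = l m, and d m lies in Z^3 (L - Id) by the
   adjugate formula. *)

Section IntegerLattices.
Variable n : nat.
Implicit Types (A : 'M[int]_n) (u v : 'rV[int]_n).

Definition in_row_lattice A v : Prop := exists k, v = k *m A.

Lemma unit_absz (x : int) : x \is a GRing.unit -> `|x|%N = 1%N.
Proof. by rewrite qualifE /= => /orP[] /eqP->. Qed.

Lemma absz_modz_lt (s x : int) : s != 0 -> (`|(x %% s)%Z| < `|s|)%N.
Proof. by move=> s0; rewrite -ltz_nat gez0_abs ?modz_ge0 // abszE ltz_mod. Qed.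

Lemma absz_modz_inj (s x y : int) : s != 0 ->
  `|(x %% s)%Z|%N = `|(y %% s)%Z|%N -> (s %| x - y)%Z.
Proof.
move=> s0 exy; rewrite -eqz_mod_dvd; apply/eqP.
by rewrite -[LHS]gez0_abs ?modz_ge0 // -[RHS]gez0_abs ?modz_ge0 // exy.
Qed.

(* Residues modulo the row lattice Z^n A are classified by the residues of
   the coordinates in the Smith normal form P *m diag s *m Q of A. *)
Lemma row_lattice_classes A : \det A != 0 ->
  exists (T : finType) (cls : 'rV[int]_n -> T), #|T| = `|\det A|%N /\
    forall u v, cls u = cls v -> in_row_lattice A (u - v).
Proof.
move=> detA0; have [P uP [Q uQ [s _ eA]]] := int_Smith_normal_form A.
have eD : \matrix_(i, j) (s`_i *+ (i == j :> nat)) = diag_mx (\row_i s`_i) :> 'M[int]_n.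
  by apply/matrixP => i j; rewrite !mxE.
rewrite eD in eA.
have detA : \det A = \det P * (\prod_(i < n) s`_i) * \det Q.
  by rewrite eA !det_mulmx det_diag; under eq_bigr do rewrite mxE.
have s_neq0 (i : 'I_n) : s`_i != 0.
  apply: contraNneq detA0 => si0.
  by rewrite detA (bigD1 i) //= si0 mul0r mulr0 mul0r.
pose T := fprod (fun i : 'I_n => 'I_`|s`_i|).
pose cls u : T := [fprod i => Ordinal (absz_modz_lt ((u *m invmx Q) 0 i) (s_neq0 i))].
exists T, cls; split.
  rewrite card_fprod detA !abszM (unit_absz (_ : \det P \is a GRing.unit)) -?unitmxE //.
  rewrite (unit_absz (_ : \det Q \is a GRing.unit)) -?unitmxE // mul1n muln1.
  by rewrite (big_morph absz abszM (erefl : `|1 : int|%N = 1%N)); apply: eq_bigr => i _; rewrite card_ord.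
move=> u v euv; pose t := (u - v) *m invmx Q.
have uvQ : u - v = t *m Q by rewrite mulmxKV.
have t_div (i : 'I_n) : (s`_i %| t ord0 i)%Z.
  have -> : t ord0 i = (u *m invmx Q) 0 i - (v *m invmx Q) 0 i.
    by rewrite /t mulmxBl !mxE.
  apply: absz_modz_inj (s_neq0 i) _.
  by have /(congr1 (fun c : T => val (c i))) := euv; rewrite !fprodE.
clearbody t; exists ((\row_j (t ord0 j %/ s`_j)%Z) *m invmx P).
rewrite uvQ eA !mulmxA mulmxKV // mul_mx_diag; congr (_ *m Q).
by apply/rowP => j; rewrite !mxE divzK.
Qed.

Lemma row_lattice_pigeonhole A (c : nat -> 'rV[int]_n) : \det A != 0 ->
  exists i j, (i < j <= `|\det A|)%N /\ in_row_lattice A (c j - c i).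
Proof.
move=> detA0; have [T [cls [cardT clsP]]] := row_lattice_classes detA0.
pose f (i : 'I_(`|\det A|).+1) := cls (c i).
have /injectivePn [i [j ij fij]] : ~~ injectiveb f.
  by apply/injectiveP => /leq_card; rewrite card_ord cardT ltnn.
have [lt_ij|lt_ji|eq_ij] := ltngtP i j; last by rewrite (val_inj eq_ij) eqxx in ij.
- by exists i, j; rewrite lt_ij -ltnS ltn_ord; split; last exact: clsP.
- by exists j, i; rewrite lt_ji -ltnS ltn_ord; split; last exact: clsP.
Qed.

Lemma absdet_row_lattice A v : in_row_lattice A (v *+ `|\det A|).
Proof.
exists (sgz (\det A) *: (v *m \adj A)).
by rewrite -scalemxAl -mulmxA mul_adj_mx mul_mx_scalar scalerA -abszEsg -natz scaler_nat.
Qed.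

End IntegerLattices.

Lemma anosov_det_subr1 (L : 'M[int]_3) : anosov_mx L -> \det (L - 1%:M) != 0.
Proof.
move=> anL; apply/eqP => detL.
apply: (anL 1); first exact: normr1.
apply/eigenvalueP.
have /det0P[v v_neq0] : \det (map_mx (intr : int -> algC) (L - 1%:M)) == 0.
  by rewrite det_map_mx detL rmorph0.
move=> vA0; exists v => //; move: vA0.
by rewrite map_mxB map_mx1 mulmxBr mulmx1 scale1r => /eqP; rewrite subr_eq0 => /eqP.
Qed.

Lemma within_comp_continuous {T U V : topologicalType} (A : set T) (B : set U)
    (e : T -> U) (f : U -> V) :
  continuous e -> e @` A `<=` B -> {within B, continuous f} ->
  {within A, continuous (f \o e)}.
Proof.
move=> ce eAB cf; apply/subspace_continuousP => t At.
have /(_ (e t) (eAB _ (imageP _ At))) := (@subspace_continuousP _ B _ f).1 cf.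
apply: cvg_trans => P /=; rewrite /within /= => /ce fP.
have {}fP : nbhs t (fun s => B (e s) -> P (f (e s))) := fP.
by apply: filterS fP => s Pfs As; apply/Pfs/eAB/imageP.
Qed.

Lemma int_valued_within01_const (R : realType) (f : R -> R) :
  {within `[0, 1], continuous f} ->
  (forall t, t \in `[0, 1] -> f t \is a Num.int) -> f 0 = f 1.
Proof.
move=> cf f_int; have in01 (t : R) : 0 <= t <= 1 -> t \in `[0, 1] by rewrite in_itv.
have [//|f01] := eqVneq (f 0) (f 1); exfalso.
pose m := Num.min (f 0) (f 1); pose M := Num.max (f 0) (f 1).
have f0_int : f 0 \is a Num.int by apply/f_int/in01; lra.
have f1_int : f 1 \is a Num.int by apply/f_int/in01; lra.
have m_int : m \is a Num.int by rewrite /m minEle; case: ifP.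
have M_int : M \is a Num.int by rewrite /M maxEle; case: ifP.
have mM : m < M by rewrite /m /M; case: (ltgtP (f 0) (f 1)) f01.
have gap : 1 <= M - m.
  have := norm_intr_ge1 (rpredB M_int m_int).
  by rewrite subr_eq0 (gt_eqF mM) ger0_norm ?subr_ge0 ?(ltW mM) //; apply.
(* [f] would take the non-integer value [m + 1/2] *)
have [c c01 fc] : exists2 c, c \in `[0, 1] & f c = m + 2^-1.
  by apply: IVT => //; rewrite -/m -/M; apply/andP; split; lra.
have half_int : (2^-1 : R) \is a Num.int by rewrite -(addKr m (2^-1)) -fc rpredD ?rpredN ?f_int.
by have := norm_intr_ge1 half_int; rewrite ger0_norm ?invr_ge0 // ?invf_neq0 //; lra.
Qed.

Lemma pair_continuousl {T U : topologicalType} (y : U) : continuous (fun x : T => (x, y)).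
Proof. by move=> x; apply: (@cvg_pair _ _ _ _ (nbhs x) (nbhs y)) => //; exact: cvg_cst. Qed.

Lemma pair_continuousr {T U : topologicalType} (x : T) : continuous (fun y : U => (x, y)).
Proof. by move=> y; apply: (@cvg_pair _ _ _ _ (nbhs x) (nbhs y)) => //; exact: cvg_cst. Qed.

Section TorusLifts.
Variable R : realType.
Local Notation vec := 'rV[R]_3.
Local Notation ir k := (map_mx (intr : int -> R) k).
Implicit Types (x y : vec) (k v : 'rV[int]_3).

Definition toZ (v : vec) : 'rV[int]_3 := map_mx (@Num.floor R) v.

Lemma toZK (v : vec) : intvec v -> ir (toZ v) = v.
Proof. by move=> v_int; apply/rowP => j; rewrite !mxE floorK. Qed.

Lemma irK : cancel (fun k => ir k) toZ.
Proof. by move=> k; apply/rowP => j; rewrite !mxE intrKfloor. Qed.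

Lemma intvec_ir k : intvec (ir k).
Proof. by move=> j; rewrite mxE rpred_int. Qed.

Lemma intvec_within01_const (f : R -> vec) :
  {within `[0, 1], continuous f} ->
  (forall t, t \in `[0, 1] -> intvec (f t)) -> f 0 = f 1.
Proof.
move=> cf f_int; apply/rowP => j.
apply: (@int_valued_within01_const _ (fun t => f t ord0 j)) => [|t /f_int//].
exact: within_continuous_comp _ _ _ (in1W (@coord_continuous _ 1 3 ord0 j)) cf.
Qed.

Lemma intvec_continuous_const (V : normedModType R) (h : V -> vec) :
  continuous h -> (forall a, intvec (h a)) -> forall a b, h a = h b.
Proof.
move=> ch h_int a b.
have segment : continuous (fun t : R => a + t *: (b - a)).
  move=> t; have cst_a : {for t, continuous (fun=> a)} by exact: cst_continuous.
  have scale : {for t, continuous (fun t : R => t *: (b - a))} by exact: continuousZl.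
  exact: continuousD cst_a scale.
have := @intvec_within01_const _
  (continuous_subspaceT (fun t => continuous_comp (segment t) (ch _))) (fun t _ => h_int _).
by rewrite /= scale0r addr0 scale1r addrC subrK.
Qed.

Definition lattice_action (H : vec -> vec) k : 'rV[int]_3 := toZ (H (ir k) - H 0).

Lemma lattice_action_id : lattice_action id =1 id.
Proof. by move=> k; rewrite /lattice_action subr0 irK. Qed.

Lemma lattice_action_eq (H K : vec -> vec) : continuous H -> continuous K ->
  same_torus_map H K -> lattice_action H =1 lattice_action K.
Proof.
move=> cH cK HK k; rewrite /lattice_action.
have HK0 : H (ir k) - K (ir k) = H 0 - K 0.
  exact: intvec_continuous_const (fun x => continuousB (cH x) (cK x)) HK (ir k) 0.
by rewrite -[H (ir k)](subrK (K (ir k))) HK0 (addrC (H 0 - K 0)) addrA addrAC addrK.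
Qed.

Section DescendingLift.
Variable H : vec -> vec.
Hypotheses (cH : continuous H) (dH : descends H).

Lemma ir_lattice_action k : ir (lattice_action H k) = H (ir k) - H 0.
Proof. by rewrite toZK //; have := dH 0 (intvec_ir k); rewrite add0r. Qed.

Lemma lift_translate x k : H (x + ir k) = H x + ir (lattice_action H k).
Proof.
have cHk : continuous (fun y => H (y + ir k) - H y).
  move=> y; have shift : {for y, continuous (fun z : vec => H (z + ir k))}.
    apply: continuous_comp (@cH _).
    have cst_k : {for y, continuous (fun=> ir k)} by exact: cst_continuous.
    exact: continuousD (@cvg_id _ _) cst_k.
  exact: continuousB shift (@cH y).
have := intvec_continuous_const cHk (fun y => dH y (intvec_ir k)) x 0.
by rewrite add0r ir_lattice_action => <-; rewrite addrCA subrr addr0.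
Qed.

Lemma lattice_actionD a b :
  lattice_action H (a + b) = lattice_action H a + lattice_action H b.
Proof.
apply: (can_inj irK); rewrite map_mxD !ir_lattice_action map_mxD.
by rewrite lift_translate ir_lattice_action addrAC addrCA.
Qed.

Lemma lattice_actionB a b :
  lattice_action H (a - b) = lattice_action H a - lattice_action H b.
Proof. by apply/eqP; rewrite eq_sym subr_eq -lattice_actionD subrK. Qed.

End DescendingLift.

Lemma lattice_action_can (H Hinv : vec -> vec) : descends H -> continuous Hinv ->
  descends Hinv -> cancel H Hinv -> cancel (lattice_action H) (lattice_action Hinv).
Proof.
move=> dH cHi dHi HK k; apply: (can_inj irK).
rewrite -[RHS]HK -[H (ir k)](subrK (H 0)) -(ir_lattice_action dH) addrC.
by rewrite lift_translate // HK add0r.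
Qed.

Lemma homotopic_lattice_action (G : vec -> vec) :
  continuous G -> homotopic_to_id G -> lattice_action G =1 id.
Proof.
move=> cG [Hom [cHom dHom Hom0 Hom1]] k.
have slice_t x : {within `[0, 1], continuous (fun t => Hom (t, x))}.
  refine (within_comp_continuous (A := `[0 : R, 1]%classic) (@pair_continuousl R _ x) _ cHom).
  by move=> _ [t + <-]; rewrite /= in_itv.
have slice_x t : 0 <= t <= 1 -> continuous (fun x => Hom (t, x)).
  move=> t01; apply/continuous_subspace_setT.
  by refine (within_comp_continuous (@pair_continuousr R vec t) _ cHom) => _ [x _ <-].
have c0 : 0 <= (0 : R) <= 1 by rewrite lexx ler01.
have c1 : 0 <= (1 : R) <= 1 by rewrite lexx ler01.
(* [t |-> lattice_action (Hom (t, .)) k] is continuous and integer valued. *)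
have act01 : Hom (0, ir k) - Hom (0, 0) = Hom (1, ir k) - Hom (1, 0).
  apply: (@intvec_within01_const (fun t => Hom (t, ir k) - Hom (t, 0))).
    exact: within_continuousB.
  by move=> t; rewrite in_itv /= => /dHom/(_ 0 (ir k) (intvec_ir k)); rewrite add0r.
move: act01; rewrite -!(ir_lattice_action (dHom _ _)) // => /(can_inj irK).
rewrite (lattice_action_eq (slice_x 0 c0) (fun x => @cvg_id _ _) Hom0) lattice_action_id.
by rewrite (lattice_action_eq (slice_x 1 c1) cG Hom1) => <-.
Qed.

Section CommutingLifts.
Variables (F G Ginv : vec -> vec) (L : 'M[int]_3).
Hypotheses (cF : continuous F) (cG : continuous G) (dG : descends G)
  (cGi : continuous Ginv) (dGi : descends Ginv)
  (GK : cancel G Ginv) (GiK : cancel Ginv G)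
  (linF : linear_part F L) (FG : same_torus_map (F \o G) (G \o F)).
Local Notation A := (L - 1%:M).
Local Notation phi := (lattice_action G).
Local Notation psi := (lattice_action Ginv).

Definition comm_defect : 'rV[int]_3 := toZ (F (G 0) - G (F 0)).

Lemma FG_comm x : F (G x) = G (F x) + ir comm_defect.
Proof.
have cFG : continuous (fun x => F (G x) - G (F x)).
  move=> y; apply: continuousB; apply: continuous_comp; by [apply: cG | apply: cF].
have := intvec_continuous_const cFG FG x 0.
rewrite /comm_defect toZK; last exact: FG.
by move=> <-; rewrite addrCA subrr addr0.
Qed.

Lemma lattice_action_mulL k : phi (k *m L) = phi k *m L.
Proof.
have FGk : F (G (ir k)) = F (G 0) + ir (phi k *m L).
  by rewrite -[ir k]add0r (lift_translate cG dG) linF map_mxM.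
have GFk : G (F (ir k)) = G (F 0) + ir (phi (k *m L)).
  by rewrite -[ir k]add0r linF (lift_translate cG dG).
apply: (can_inj irK); apply: (addrI (G (F 0) + ir comm_defect)).
by rewrite addrAC -GFk -(FG_comm (ir k)) FGk FG_comm.
Qed.

Lemma lattice_action_mulA k : phi (k *m A) = phi k *m A.
Proof. by rewrite !mulmxBr !mulmx1 (lattice_actionB cG dG) lattice_action_mulL. Qed.

Lemma lattice_action_row_lattice v : in_row_lattice A (phi v) -> in_row_lattice A v.
Proof.
have phiK := lattice_action_can dG cGi dGi GK.
have psiK := lattice_action_can dGi cG dG GiK.
have psi_mulA k : psi (k *m A) = psi k *m A.
  by apply: (can_inj phiK); rewrite psiK lattice_action_mulA psiK.
by move=> [k phi_v]; exists (psi k); rewrite -psi_mulA -phi_v phiK.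
Qed.

Fixpoint iter_defect l : 'rV[int]_3 :=
  if l is l'.+1 then phi (iter_defect l') + comm_defect else 0.

Lemma F_iter_comm l x : F (iter l G x) = iter l G (F x) + ir (iter_defect l).
Proof.
elim: l => [|l IHl] /=; first by rewrite map_mx0 addr0.
by rewrite FG_comm IHl (lift_translate cG dG) map_mxD addrA.
Qed.

Lemma iter_defect_shift i d :
  in_row_lattice A (iter_defect (i + d) - iter_defect i) ->
  in_row_lattice A (iter_defect d).
Proof.
elim: i => [|i IHi] /=; first by rewrite subr0.
rewrite opprD addrACA subrr addr0 -(lattice_actionB cG dG).
by move=> /lattice_action_row_lattice.
Qed.

Lemma iter_defect_id : phi =1 id -> forall l, iter_defect l = comm_defect *+ l.
Proof. by move=> phi_id; elim=> //= l ->; rewrite phi_id mulrSr. Qed.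

Lemma commuting_lift l : in_row_lattice A (iter_defect l) ->
  exists Ghat, same_torus_map Ghat (iter l G) /\ forall x, F (Ghat x) = Ghat (F x).
Proof.
move=> [k ck]; exists (fun x => iter l G x - ir k); split.
  by move=> x; rewrite addrAC subrr add0r -map_mxN; apply: intvec_ir.
move=> x; rewrite -map_mxN linF F_iter_comm ck -addrA -map_mxD.
by rewrite mulmxBr mulmx1 mulNmx addrAC subrr add0r map_mxN.
Qed.

End CommutingLifts.

End TorusLifts.

Theorem mainTheorem6 (R : realType) (F : 'rV[R]_3 -> 'rV[R]_3) (L : 'M[int]_3) :
  diff1_lift F -> part_hyp F -> linear_part F L -> anosov_mx L ->
  forall G : 'rV[R]_3 -> 'rV[R]_3,
    diff1_lift G ->
    same_torus_map (F \o G) (G \o F) ->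
    (exists (l : nat) (Ghat : 'rV[R]_3 -> 'rV[R]_3),
        [/\ (0 < l)%N, (l <= `|\det (L - 1%:M)|)%N,
            same_torus_map Ghat (iter l G) &
            forall x, F (Ghat x) = Ghat (F x)])
    /\
    (homotopic_to_id G ->
     exists (l : nat) (Ghat : 'rV[R]_3 -> 'rV[R]_3),
        [/\ (0 < l)%N, (l %| `|\det (L - 1%:M)|)%N,
            same_torus_map Ghat (iter l G) &
            forall x, F (Ghat x) = Ghat (F x)]).
Proof.
move=> [Finv [_ _ [[diffF _] _] _]] _ linF anL G.
move=> [Ginv [GK GiK [[diffG _] [diffGi _]] [dG dGi]]] FG.
have cF : continuous F by move=> x; exact: differentiable_continuous (diffF x).
have cG : continuous G by move=> x; exact: differentiable_continuous (diffG x).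
have cGi : continuous Ginv by move=> x; exact: differentiable_continuous (diffGi x).
have detA := anosov_det_subr1 anL.
have lift := commuting_lift cF cG dG linF FG.
split.
  have [i [j [/andP[lt_ij le_jd] cij]]] := row_lattice_pigeonhole (iter_defect F G) detA.
  move: cij; rewrite -(subnKC (ltnW lt_ij)) => /(iter_defect_shift cF cG dG cGi dGi GK GiK linF FG).
  move=> /lift [Ghat [GhatG FGhat]]; exists (j - i)%N, Ghat; split => //.
    by rewrite subn_gt0.
  exact: leq_trans (leq_subr i j) le_jd.
move=> /(homotopic_lattice_action cG) phi_id.
have /lift [Ghat [GhatG FGhat]] : in_row_lattice (L - 1%:M) (iter_defect F G `|\det (L - 1%:M)|).
  by rewrite iter_defect_id //; exact: absdet_row_lattice.
by exists `|\det (L - 1%:M)|%N, Ghat; split; rewrite ?absz_gt0.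
Qed.
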